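(* Let $K$ be a flag simplicial complex with a hereditary ordering $\succ$, and let $r$ be a positive integer. Suppose that for any two simplices $\sigma,\tau\in K$ with $\dim\sigma=\dim\tau=r$ and $\mu(\sigma)=\mu(\tau)$ we have $\sigma\cup\tau\in K$. Then for any two simplices $\sigma,\tau\in K$ with $\dim\sigma=\dim\tau>r$ and $\mu(\sigma)=\mu(\tau)$ we also have $\sigma\cup\tau\in K$.
   Context: $K$ is a finite simplicial complex (family of subsets of a finite vertex set containing $\emptyset$, closed under subsets); $\dim\sigma=|\sigma|-1$. $K$ is flag if whenever vertices $v_0,\dots,v_q$ are pairwise joined by edges of $K$, $\{v_0,\dots,v_q\}\in K$. For a strict total ordering $\succ$ of $K$ and non-empty $\sigma$, $\mu(\sigma)$ is the $\succ$-largest facet (codimension-one face) of $\sigma$; $\succ$ is hereditary if $\sigma\succ\tau$ whenever $\dim\sigma>\dim\tau$, and $\sigma\succ\tau$ whenever $\mu(\sigma)\succ\mu(\tau)$. *)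

From mathcomp Require Import all_boot.
Set Implicit Arguments. Unset Strict Implicit. Unset Printing Implicit Defensive.

(* Simplex dimension: dim s = #|s| - 1, so we compare cardinalities. *)
Definition simplicial_complex (V : finType) (K : {set {set V}}) : Prop :=
  set0 \in K /\ forall s t : {set V}, s \in K -> t \subset s -> t \in K.

Definition flag (V : finType) (K : {set {set V}}) : Prop :=
  forall S : {set V},
    (forall v, v \in S -> [set v] \in K) ->
    (forall v w, v \in S -> w \in S -> v != w -> [set v; w] \in K) ->
    S \in K.

(* succ s t means  s ≻ t.  A strict total ordering of (the simplices of) K. *)
Definition strict_total_on (V : finType) (K : {set {set V}}) (succ : rel {set V}) : Prop :=
  [/\ forall s, s \in K -> ~~ succ s s,
      forall s t u, s \in K -> t \in K -> u \in K -> succ s t -> succ t u -> succ s u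
    & forall s t, s \in K -> t \in K -> s != t -> succ s t || succ t s].

Definition facet (V : finType) (t s : {set V}) : bool :=
  (t \subset s) && (#|t|.+1 == #|s|).

(* mu succ s : the succ-largest facet of s (set0 if none exists, which does
   not happen for non-empty simplices of K under a strict total ordering). *)
Definition mu (V : finType) (succ : rel {set V}) (s : {set V}) : {set V} :=
  odflt set0 [pick t | facet t s &&
                 [forall t', (facet t' s && (t' != t)) ==> succ t t']].

Definition hereditary (V : finType) (K : {set {set V}}) (succ : rel {set V}) : Prop :=
  (forall s t, s \in K -> t \in K -> #|s| > #|t| -> succ s t) /\
  (forall s t, s \in K -> t \in K -> s != set0 -> t != set0 ->
     succ (mu succ s) (mu succ t) -> succ s t).

(** Let σ, τ have dimension n > r and a common ≻-largest facet ρ, and let ρ' be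
    the largest facet of ρ.  For a vertex u of σ outside ρ, the set u ∪ ρ' is a
    facet of σ other than ρ, so ρ ≻ u ∪ ρ'; if its largest facet were not ρ', it
    would beat ρ' = μ(ρ), and heredity would give u ∪ ρ' ≻ ρ.  Hence
    μ(u ∪ ρ') = ρ'.  So for v ∈ σ \ τ and w ∈ τ \ σ the (n-1)-simplices v ∪ ρ'
    and w ∪ ρ' share their largest facet, and by induction on n their union,
    which contains the edge vw, lies in K.  Since K is flag and every other pair
    of vertices of σ ∪ τ lies in σ or in τ, σ ∪ τ ∈ K. *)
From mathcomp Require Import all_boot.
Set Implicit Arguments. Unset Strict Implicit. Unset Printing Implicit Defensive.

Lemma seq_greatest (T : eqType) (P : pred T) (e : rel T) (s : seq T) :
  (forall a b c, P a -> P b -> P c -> e a b -> e b c -> e a c) ->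
  (forall a b, P a -> P b -> a != b -> e a b || e b a) ->
  {subset s <= P} -> s != [::] ->
  exists2 m, m \in s & forall t, t \in s -> t != m -> e m t.
Proof.
move=> e_trans e_total; elim: s => [//|x s IHs] sP _.
have Px : P x by apply: sP; exact: mem_head.
have {}sP : {subset s <= P} by move=> y ys; apply: sP; rewrite inE ys orbT.
have [-> | s_ne] := eqVneq s [::].
  by exists x => [|t]; rewrite ?inE // => /eqP->; rewrite eqxx.
have [m ms m_max] := IHs sP s_ne.
have [x_m | x_m] := eqVneq x m.
  exists m => [|t]; first by rewrite inE ms orbT.
  by rewrite inE x_m => /orP[/eqP-> | /m_max]; rewrite ?eqxx.
case/orP: (e_total _ _ Px (sP _ ms) x_m) => [e_xm | e_mx].
  exists x => [|t]; rewrite ?mem_head // inE => /orP[/eqP-> | ts]; first by rewrite eqxx.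
  have [-> // | t_m] := eqVneq t m.
  by move=> _; apply: e_trans (sP _ ms) (sP _ ts) e_xm (m_max _ ts t_m).
by exists m => [|t]; rewrite inE ?ms ?orbT // => /orP[/eqP-> | /m_max].
Qed.

Section HereditaryOrdering.

Variables (V : finType) (K : {set {set V}}) (succ : rel {set V}).
Hypotheses (K_complex : simplicial_complex K) (succ_order : strict_total_on K succ).

Lemma simplex_sub (s t : {set V}) : s \in K -> t \subset s -> t \in K.
Proof. by case: K_complex => _; apply. Qed.

Lemma succ_asym s t : s \in K -> t \in K -> succ s t -> ~~ succ t s.
Proof.
case: succ_order => irr trans _ sK tK st; apply/negP => ts.
by move: (irr _ sK); rewrite (trans _ _ _ sK tK sK st ts).
Qed.

Lemma muP s : s \in K -> s != set0 ->
  facet (mu succ s) s /\ forall t, facet t s -> t != mu succ s -> succ (mu succ s) t.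
Proof.
case: succ_order => _ trans total sK /set0Pn[a a_s].
pose facets := [pred t : {set V} | facet t s].
have facets_ne : enum facets != [::].
  have : s :\ a \in enum facets.
    by rewrite mem_enum inE /facet subD1set /= (cardsD1 a s) a_s.
  by case: (enum _).
have facetsK : {subset enum facets <= [in K]}.
  by move=> t; rewrite mem_enum => /andP[ts _]; exact: simplex_sub sK ts.
have [m] := seq_greatest trans total facetsK facets_ne.
rewrite mem_enum inE => m_facet m_max.
rewrite /mu; case: pickP => [t /andP[t_facet /forallP t_max] | no_max] /=.
  by split=> // u u_facet u_t; move: (t_max u); rewrite u_facet u_t.
move: (no_max m); rewrite m_facet /=; move/negP; case.
apply/forallP => u; apply/implyP => /andP[u_facet u_m].
by apply: m_max; rewrite ?mem_enum ?inE.
Qed.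

Lemma mu_sub s : s \in K -> s != set0 -> mu succ s \subset s.
Proof. by move=> sK /(muP sK) [/andP[]]. Qed.

Lemma card_mu s : s \in K -> s != set0 -> #|mu succ s|.+1 = #|s|.
Proof. by move=> sK /(muP sK) [/andP[_ /eqP]]. Qed.

Lemma mu_in s : s \in K -> s != set0 -> mu succ s \in K.
Proof. by move=> sK s_ne; apply: simplex_sub sK (mu_sub sK s_ne). Qed.

Lemma mu_neq0 s : s \in K -> 1 < #|s| -> mu succ s != set0.
Proof. by move=> sK s_gt1; rewrite -card_gt0 -ltnS card_mu // -card_gt0 ltnW. Qed.

Definition mu_union_closed (n : nat) : Prop :=
  forall s t, s \in K -> t \in K -> #|s| = n -> #|t| = n ->
    mu succ s = mu succ t -> s :|: t \in K.

Lemma flag_setU : flag K -> forall s t, s \in K -> t \in K ->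
  (forall v w, v \in s :\: t -> w \in t :\: s -> [set v; w] \in K) ->
  s :|: t \in K.
Proof.
move=> K_flag s t sK tK cross_edges; apply: K_flag => [v | v w].
  by rewrite inE => /orP[] v_in; [apply: simplex_sub sK _ | apply: simplex_sub tK _];
    rewrite sub1set.
have edge_in B x y : B \in K -> x \in B -> y \in B -> [set x; y] \in K.
  by move=> BK xB yB; apply: simplex_sub BK _; rewrite subUset !sub1set xB yB.
rewrite !inE => + + _.
case v_s: (v \in s); case v_t: (v \in t); case w_s: (w \in s); case w_t: (w \in t) => //= _ _;
  first [ by apply: (edge_in s); rewrite ?v_s ?w_s
        | by apply: (edge_in t); rewrite ?v_t ?w_t
        | by apply: cross_edges; rewrite !inE ?v_s ?v_t ?w_s ?w_t
        | by rewrite setUC; apply: cross_edges; rewrite !inE ?v_s ?v_t ?w_s ?w_t ].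
Qed.

Hypothesis mu_succ_mono : forall s t, s \in K -> t \in K -> s != set0 -> t != set0 ->
  succ (mu succ s) (mu succ t) -> succ s t.

Section AddVertex.

Variables (s : {set V}) (u : V).
Hypotheses (sK : s \in K) (s_gt1 : 1 < #|s|) (u_s : u \in s) (u_mu : u \notin mu succ s).

Let s_neq0 : s != set0. Proof. by rewrite -card_gt0 ltnW. Qed.

Lemma setU1_mu_mu_sub : u |: mu succ (mu succ s) \subset s.
Proof.
rewrite subUset sub1set u_s (subset_trans (mu_sub _ _)) ?mu_sub ?mu_in ?mu_neq0 //.
Qed.

Lemma setU1_mu_mu_in : u |: mu succ (mu succ s) \in K.
Proof. exact: simplex_sub sK setU1_mu_mu_sub. Qed.

Lemma card_setU1_mu_mu : #|u |: mu succ (mu succ s)| = #|mu succ s|.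
Proof.
have u_mu2 : u \notin mu succ (mu succ s).
  by apply: contra u_mu; apply/subsetP/mu_sub; rewrite ?mu_in ?mu_neq0.
by rewrite cardsU1 u_mu2 add1n card_mu ?mu_in ?mu_neq0.
Qed.

Lemma mu_setU1_mu_mu : mu succ (u |: mu succ (mu succ s)) = mu succ (mu succ s).
Proof.
set rho := mu succ s; set rho' := mu succ rho; set s' := u |: rho'.
have rhoK : rho \in K := mu_in sK s_neq0.
have s'K : s' \in K := setU1_mu_mu_in.
have s'_neq0 : s' != set0 by apply/set0Pn; exists u; rewrite setU11.
have [_ rho_max] := muP sK s_neq0.
have [_ s'_max] := muP s'K s'_neq0.
apply/eqP; apply: contraT => mu_s'_rho'.
have rho_s' : succ rho s'.
  apply: rho_max; last by apply: contraNneq u_mu => <-; rewrite setU11.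
  by rewrite /facet setU1_mu_mu_sub card_setU1_mu_mu card_mu /=.
have : succ s' rho.
  apply: mu_succ_mono; rewrite ?mu_neq0 //; apply: s'_max; last by rewrite eq_sym.
  by rewrite /facet subsetUr card_setU1_mu_mu card_mu ?mu_in ?mu_neq0 /=.
by move/negP: (succ_asym rhoK s'K rho_s').
Qed.

End AddVertex.

Lemma mu_union_closedS n : flag K -> 0 < n -> mu_union_closed n -> mu_union_closed n.+1.
Proof.
move=> K_flag n_gt0 IHn s t sK tK card_s card_t mu_st.
have [s_gt1 t_gt1] : 1 < #|s| /\ 1 < #|t| by rewrite card_s card_t ltnS.
apply: flag_setU => // v w; rewrite !inE => /andP[v_t v_s] /andP[w_s w_t].
have v_mu : v \notin mu succ s.
  by apply: contra v_t; apply/subsetP; rewrite mu_st mu_sub // -card_gt0 ltnW.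
have w_mu : w \notin mu succ t.
  by apply: contra w_s; apply/subsetP; rewrite -mu_st mu_sub // -card_gt0 ltnW.
have vw_in := IHn _ _ (setU1_mu_mu_in sK s_gt1 v_s) (setU1_mu_mu_in tK t_gt1 w_t).
apply: simplex_sub (vw_in _ _ _) _.
- by apply: succn_inj; rewrite card_setU1_mu_mu // card_mu // -card_gt0 ltnW.
- by apply: succn_inj; rewrite card_setU1_mu_mu // card_mu // -card_gt0 ltnW.
- by rewrite !mu_setU1_mu_mu // mu_st.
- by rewrite subUset !sub1set !inE !eqxx ?orbT.
Qed.

End HereditaryOrdering.

Theorem lemma6 (V : finType) (K : {set {set V}}) (succ : rel {set V}) (r : nat) :
  simplicial_complex K -> flag K -> strict_total_on K succ -> hereditary K succ ->
  0 < r ->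
  (forall s t, s \in K -> t \in K -> #|s| = r.+1 -> #|t| = r.+1 ->
     mu succ s = mu succ t -> s :|: t \in K) ->
  forall s t, s \in K -> t \in K -> #|s| = #|t| -> r.+1 < #|s| ->
     mu succ s = mu succ t -> s :|: t \in K.
Proof.
move=> K_complex K_flag succ_order [_ mu_succ_mono] _ base s t sK tK card_st r_lt.
have closed_above k : mu_union_closed K succ (r.+1 + k).
  elim: k => [|k IHk]; first by rewrite addn0.
  by rewrite addnS; apply: mu_union_closedS.
have := closed_above (#|s| - r.+1); rewrite subnKC; last exact: ltnW.
by move=> closed_s; apply: (closed_s s t sK tK erefl (esym card_st)).
Qed.
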